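(* Let $n,k,t$ be positive integers with $k<n$ and $t\ge 4$, let $q$ be a prime power and $\mathcal{D}$ the Desarguesian $(t-1)$-spread of $\mathrm{PG}(nt-1,q)$. Let $\nu$ be a $\mathcal{D}_{n-k-1}$-subspace, $\Pi$ an $(nt-kt+1)$-dimensional subspace containing $\nu$ such that the points of $\mathcal{B}(\Pi)$ span an $(n-k+1)$-dimensional subspace of $\mathrm{PG}(n-1,q^t)$, $\Omega$ an $(nt-kt-2)$-dimensional subspace of $\Pi$ meeting $\nu$ in an $(nt-kt-4)$-dimensional subspace, $\Gamma$ a plane of $\Pi$ skew from $\Omega$, $\bar{B}$ a minimal blocking set of $\Gamma$ disjoint from $\nu$, and $K$ the cone with vertex $\Omega$ and base $\bar{B}$. Then the blocking set $\mathcal{B}(K)$ (with respect to $(k-1)$-dimensional subspaces) of $\mathrm{PG}(n-1,q^t)$ spans a subspace of dimension $n-k+1$.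
   Context: Field reduction: each point of $\mathrm{PG}(n-1,q^t)$ corresponds to a $(t-1)$-dimensional subspace of $\mathrm{PG}(nt-1,q)$; these form the Desarguesian $(t-1)$-spread $\mathcal{D}$. A $\mathcal{D}_{r-1}$-subspace is an $(rt-1)$-dimensional subspace spanned by elements of $\mathcal{D}$. For $U\subseteq\mathrm{PG}(nt-1,q)$, $\mathcal{B}(U)$ is the set of elements of $\mathcal{D}$ meeting $U$, identified with points of $\mathrm{PG}(n-1,q^t)$. The cone with vertex $\Omega$ and base $\bar{B}$ is $\bigcup_{P\in\bar B}\langle P,\Omega\rangle$. A minimal blocking set of a plane is a point set meeting every line, no proper subset of which does so. *)

From HB Require Import structures.
From mathcomp Require Import all_boot all_order all_algebra all_field.
Set Implicit Arguments. Unset Strict Implicit. Unset Printing Implicit Defensive.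
Import GRing.Theory.
Local Open Scope ring_scope.

(* F = GF(q), L = GF(q^t) as a field extension of F
   of degree t = \dim {:L}.  The ambient space Vn n = L^n, viewed as an
   F-vector space of dimension n*t, realises PG(nt-1,q) (its F-subspaces),
   and, via its L-subspaces (F-subspaces closed under L-scaling),
   PG(n-1,q^t).  Projective dimension = vector dimension - 1. *)

Section FieldReduction.
Variables (F : finFieldType) (L : fieldExtType F) (n : nat).

Definition Vn := {ffun 'I_n -> L}.

Definition scaleL (c : L) (v : Vn) : Vn := [ffun i => c * v i].

(* the element of the Desarguesian spread D determined by the point <v>_L
   of PG(n-1,q^t): the F-span of { c v | c in L } *)
Definition spread_elt (v : Vn) : {vspace Vn} :=
  <<[seq scaleL c v | c <- vbasis {:L}]>>%VS.

Definition Lclosed (W : {vspace Vn}) : Prop :=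
  forall (c : L) (v : Vn), v \in W -> scaleL c v \in W.

(* W is a D_{r-1}-subspace: an (rt-1)-dimensional subspace spanned by
   elements of D *)
Definition Dsubspace (r : nat) (W : {vspace Vn}) : Prop :=
  \dim W = (r * \dim {:L})%N /\
  exists s : seq Vn, all (fun v => v != 0) s /\
    W = (\sum_(v <- s) spread_elt v)%VS.

Definition is_point (X : {vspace Vn}) : Prop := \dim X = 1%N.

Definition points_of (U : {vspace Vn}) : {vspace Vn} -> Prop :=
  fun X => is_point X /\ (X <= U)%VS.

(* B(U) for a point set U of PG(nt-1,q): the spread elements meeting U,
   identified with points of PG(n-1,q^t); v (nonzero) represents the point
   <v>_L, i.e. the spread element spread_elt v. *)
Definition Bset (U : {vspace Vn} -> Prop) : Vn -> Prop :=
  fun v => v != 0 /\ exists X, U X /\ is_point X /\ (X <= spread_elt v)%VS.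

Definition Lspan_of (P : Vn -> Prop) (W : {vspace Vn}) : Prop :=
  [/\ Lclosed W, (forall v, P v -> v \in W) &
      (forall W', Lclosed W' -> (forall v, P v -> v \in W') -> (W <= W')%VS)].

Definition pdimL (W : {vspace Vn}) : nat := ((\dim W %/ \dim {:L}).-1)%N.

Definition blocking_set_of (Gamma : {vspace Vn}) (B : {vspace Vn} -> Prop)
  : Prop :=
  (forall X, B X -> points_of Gamma X) /\
  (forall l : {vspace Vn}, \dim l = 2%N -> (l <= Gamma)%VS ->
     exists X, B X /\ (X <= l)%VS).

Definition minimal_blocking_set_of (Gamma : {vspace Vn})
  (B : {vspace Vn} -> Prop) : Prop :=
  blocking_set_of Gamma B /\
  forall B' : {vspace Vn} -> Prop, (forall X, B' X -> B X) ->
    blocking_set_of Gamma B' -> forall X, B X -> B' X.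

Definition cone (Omega : {vspace Vn}) (B : {vspace Vn} -> Prop)
  : {vspace Vn} -> Prop :=
  fun X => is_point X /\ exists P, B P /\ (X <= P + Omega)%VS.

End FieldReduction.

From HB Require Import structures.
From mathcomp Require Import all_boot all_order all_algebra all_field.
From mathcomp Require Import zify.
Set Implicit Arguments. Unset Strict Implicit. Unset Printing Implicit Defensive.
Import GRing.Theory.
Local Open Scope ring_scope.

(* The span of B(K) is the span of B(Pi): every point of K lies in Pi, and
   conversely an L-subspace W' containing B(K) contains Pi.  Indeed every
   point of the vertex Omega lies on K, so Omega <= W'; a spread element
   inside nu has dimension t, while Omega :&: nu has codimension 3 < t in
   nu, so the two meet and W', being L-closed, contains that spread element;
   hence nu <= W' and Pi = nu + Omega <= W' by a dimension count. *)

Lemma subspace_of_dim (K : fieldType) (vT : vectType K) (U : {vspace vT}) m :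
  (m <= \dim U)%N -> exists2 V : {vspace vT}, (V <= U)%VS & \dim V = m.
Proof.
move=> le_mU; exists <<take m (vbasis U)>>%VS.
  by apply/span_subvP => x /mem_take; exact: vbasis_mem.
have free_take : free (take m (vbasis U)).
  apply: (@catl_free _ _ (drop m (vbasis U))).
  by rewrite cat_take_drop (basis_free (vbasisP U)).
by rewrite (eqP free_take) size_take size_tuple; case: ltngtP le_mU.
Qed.

Section FieldReductionFacts.
Variables (F : finFieldType) (L : fieldExtType F) (n : nat).
Local Notation Vn := (Vn L n).

Lemma scaleLA c d (v : Vn) : scaleL c (scaleL d v) = scaleL (c * d) v.
Proof. by apply/ffunP => i; rewrite !ffunE mulrA. Qed.

Lemma scale1L (v : Vn) : scaleL 1 v = v.
Proof. by apply/ffunP => i; rewrite !ffunE mul1r. Qed.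

Lemma scaleL0 c : scaleL c (0 : Vn) = 0.
Proof. by apply/ffunP => i; rewrite !ffunE mulr0. Qed.

Lemma scale0L (v : Vn) : scaleL 0 v = 0.
Proof. by apply/ffunP => i; rewrite !ffunE mul0r. Qed.

Lemma scaleLDr c (u v : Vn) : scaleL c (u + v) = scaleL c u + scaleL c v.
Proof. by apply/ffunP => i; rewrite !ffunE mulrDr. Qed.

Definition scaleLv (v : Vn) (c : L) : Vn := scaleL c v.

Lemma scaleLv_is_linear v : linear (scaleLv v).
Proof. by move=> a c d; apply/ffunP => i; rewrite !ffunE mulrDl scalerAl. Qed.

HB.instance Definition _ v :=
  GRing.isLinear.Build F L Vn *:%R (scaleLv v) (scaleLv_is_linear v).

Lemma spread_eltE v : spread_elt v = (linfun (scaleLv v) @: fullv)%VS.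
Proof.
rewrite /spread_elt -[X in (_ @: X)%VS](span_basis (vbasisP fullv)) limg_span.
by congr span; apply: eq_map => c; rewrite lfunE.
Qed.

Lemma spread_eltP (v x : Vn) :
  reflect (exists c, x = scaleL c v) (x \in spread_elt v).
Proof.
rewrite spread_eltE; apply: (iffP memv_imgP).
  by case=> c _ ->; exists c; rewrite lfunE.
by case=> c ->; exists c; rewrite ?memvf // lfunE.
Qed.

Lemma memv_spread_elt (v : Vn) : v \in spread_elt v.
Proof. by apply/spread_eltP; exists 1; rewrite scale1L. Qed.

Lemma dim_spread_elt (v : Vn) : v != 0 -> \dim (spread_elt v) = \dim {:L}.
Proof.
move=> v_nz; rewrite spread_eltE limg_dim_eq // capfv; apply/eqP; rewrite -subv0.
apply/subvP => c; rewrite memv_ker lfunE memv0 => /eqP cv0.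
apply: contraR v_nz => c_nz; apply/eqP/ffunP => i.
have /eqP := congr1 (fun f : Vn => f i) cv0.
by rewrite !ffunE mulf_eq0 (negbTE c_nz) => /eqP.
Qed.

Lemma Lclosed0 : Lclosed (0%VS : {vspace Vn}).
Proof. by move=> c x; rewrite memv0 => /eqP ->; rewrite scaleL0 mem0v. Qed.

Lemma LclosedD (U V : {vspace Vn}) : Lclosed U -> Lclosed V -> Lclosed (U + V)%VS.
Proof.
move=> clU clV c x /memv_addP [u uU [w wV ->]].
by rewrite scaleLDr memv_add ?clU ?clV.
Qed.

Lemma Lclosed_spread_elt (v : Vn) : Lclosed (spread_elt v).
Proof.
by move=> c x /spread_eltP [d ->]; apply/spread_eltP; exists (c * d); rewrite scaleLA.
Qed.

Lemma Lclosed_Dsubspace r (W : {vspace Vn}) : Dsubspace r W -> Lclosed W.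
Proof.
case=> _ [s [_ ->]]; elim: s => [|v s IHs]; first by rewrite big_nil; exact: Lclosed0.
by rewrite big_cons; apply: LclosedD => //; exact: Lclosed_spread_elt.
Qed.

Lemma spread_elt_subv (W : {vspace Vn}) v :
  Lclosed W -> v \in W -> (spread_elt v <= W)%VS.
Proof. by move=> clW vW; apply/subvP => x /spread_eltP [c ->]; exact: clW. Qed.

Lemma Lclosed_spread_mem (W : {vspace Vn}) v x :
  Lclosed W -> x \in spread_elt v -> x != 0 -> x \in W -> v \in W.
Proof.
move=> clW /spread_eltP [c ->] cv_nz /(clW c^-1).
have c_nz : c != 0 by apply: contraNneq cv_nz => ->; rewrite scale0L.
by rewrite scaleLA mulVf // scale1L.
Qed.

Lemma Lclosed_subv_by_dim (U V W : {vspace Vn}) :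
  Lclosed U -> Lclosed W -> (V <= U)%VS -> (V <= W)%VS ->
  (\dim U < \dim {:L} + \dim V)%N -> (U <= W)%VS.
Proof.
move=> clU clW VU VW dimUV; apply/subvP => v vU.
have [-> | v_nz] := eqVneq v 0; first exact: mem0v.
set C := (spread_elt v :&: V)%VS.
have C_nz : C != 0%VS.
  apply: contraTneq dimUV => C0; rewrite -leqNgt -(dim_spread_elt v_nz).
  have := dimv_sum_cap (spread_elt v) V; rewrite -/C C0 dimv0 addn0 => <-.
  by apply: dimvS; rewrite subv_add VU spread_elt_subv.
have /memv_capP [xv xV] := memv_pick C.
by apply: (Lclosed_spread_mem clW xv); rewrite ?vpick0 // (subvP VW).
Qed.

Lemma is_point_vpick (X : {vspace Vn}) : is_point X -> X = <[vpick X]>%VS.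
Proof.
move=> ptX; have X_nz : X != 0%VS by rewrite -dimv_eq0 ptX.
by apply/esym/eqP; rewrite eqEdim -memvE memv_pick dim_vline vpick0 X_nz ptX.
Qed.

Lemma Bset_points_subv (K : {vspace Vn} -> Prop) (W X : {vspace Vn}) :
  (forall v, Bset K v -> v \in W) -> K X -> is_point X -> (X <= W)%VS.
Proof.
move=> BW KX ptX; rewrite (is_point_vpick ptX) -memvE; apply: BW.
have X_nz : X != 0%VS by rewrite -dimv_eq0 ptX.
split; first by rewrite vpick0.
by exists X; rewrite {3}(is_point_vpick ptX) -memvE memv_spread_elt.
Qed.

Lemma Bset_subv (K : {vspace Vn} -> Prop) (W : {vspace Vn}) :
  Lclosed W -> (forall X, K X -> (X <= W)%VS) -> forall v, Bset K v -> v \in W.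
Proof.
move=> clW KW v [_ [X [KX [ptX Xv]]]].
have X_nz : X != 0%VS by rewrite -dimv_eq0 ptX.
apply: (Lclosed_spread_mem clW (subvP Xv _ (memv_pick X))); first by rewrite vpick0.
exact: subvP (KW X KX) _ (memv_pick X).
Qed.

Lemma Lspan_of_Bset_points (K : {vspace Vn} -> Prop) (U W : {vspace Vn}) :
  (forall X, K X -> points_of U X) ->
  (forall W', Lclosed W' -> (forall v, Bset K v -> v \in W') -> (U <= W')%VS) ->
  Lspan_of (Bset (points_of U)) W -> Lspan_of (Bset K) W.
Proof.
move=> KU BKU [clW BUW minW]; split=> // [v [v_nz [X [KX [ptX Xv]]]] | W' clW' BKW'].
  by apply: BUW; split=> //; exists X; split; first exact: KU.
apply: minW => //; apply: Bset_subv => // X [_ XU].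
exact: subv_trans XU (BKU W' clW' BKW').
Qed.

Lemma blocking_set_nonempty (Gamma : {vspace Vn}) (B : {vspace Vn} -> Prop) :
  (2 <= \dim Gamma)%N -> blocking_set_of Gamma B -> exists P, B P.
Proof.
move=> dimG [_ blockB]; have [l lG dim_l] := subspace_of_dim dimG.
by have [P [BP _]] := blockB l dim_l lG; exists P.
Qed.

Lemma cone_points_of (U Omega : {vspace Vn}) (B : {vspace Vn} -> Prop) :
  (forall P, B P -> (P <= U)%VS) -> (Omega <= U)%VS ->
  forall X, cone Omega B X -> points_of U X.
Proof.
move=> BU OmU X [ptX [P [BP XP]]]; split=> //.
by apply: subv_trans XP _; rewrite subv_add BU.
Qed.

Lemma cone_vertex_subv (Omega W : {vspace Vn}) (B : {vspace Vn} -> Prop) P :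
  B P -> (forall X, cone Omega B X -> (X <= W)%VS) -> (Omega <= W)%VS.
Proof.
move=> BP coneW; apply/subvP => w wOm.
have [-> | w_nz] := eqVneq w 0; first exact: mem0v.
rewrite memvE; apply: coneW; split; first by rewrite /is_point dim_vline w_nz.
by exists P; split=> //; rewrite -memvE (subvP (addvSr P Omega)).
Qed.

End FieldReductionFacts.

Theorem proposition4p11 (F : finFieldType) (L : fieldExtType F)
  (n k t : nat)
  (hk0 : (0 < k)%N) (hkn : (k < n)%N) (ht : (4 <= t)%N)
  (hL : \dim {:L}%VS = t)
  (nu Pi Omega Gamma : {vspace Vn L n}) (Bbar : {vspace Vn L n} -> Prop)
  (hnu : Dsubspace (n - k) nu)
  (hPi : \dim Pi = ((n * t - k * t + 1).+1)%N)
  (hnuPi : (nu <= Pi)%VS)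
  (hBPi : exists W, Lspan_of (Bset (points_of Pi)) W /\
                    pdimL W = (n - k + 1)%N)
  (hOm : \dim Omega = ((n * t - k * t - 2).+1)%N)
  (hOmPi : (Omega <= Pi)%VS)
  (hOmnu : \dim (Omega :&: nu) = ((n * t - k * t - 4).+1)%N)
  (hGa : \dim Gamma = 3%N)
  (hGaPi : (Gamma <= Pi)%VS)
  (hGaOm : (Gamma :&: Omega = 0)%VS)
  (hB : minimal_blocking_set_of Gamma Bbar)
  (hBnu : forall X, Bbar X -> (X :&: nu = 0)%VS) :
  exists W, Lspan_of (Bset (cone Omega Bbar)) W /\ pdimL W = (n - k + 1)%N.
Proof.
case: hBPi => W [spanW dimW]; exists W; split=> //.
have [blockB _] := hB; have [BGa _] := blockB.
apply: (Lspan_of_Bset_points _ _ spanW).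
  apply: cone_points_of hOmPi => P /BGa [_ PGa]; exact: subv_trans PGa hGaPi.
move=> W' clW' BW'.
have coneW X : cone Omega Bbar X -> (X <= W')%VS.
  by move=> coneX; apply: Bset_points_subv BW' coneX (proj1 coneX).
have [P0 BP0] : exists P, Bbar P by apply: blocking_set_nonempty blockB; rewrite hGa.
have OmW := cone_vertex_subv BP0 coneW.
have [dim_nu _] := hnu.
have dim_ge : (t <= n * t - k * t)%N by rewrite -mulnBl leq_pmull ?subn_gt0.
have nuW : (nu <= W')%VS.
  apply: (Lclosed_subv_by_dim (Lclosed_Dsubspace hnu) clW' (capvSr Omega nu)).
    exact: subv_trans (capvSl Omega nu) OmW.
  rewrite dim_nu hOmnu hL mulnBl; lia.
have PiE : Pi = (nu + Omega)%VS.
  apply/esym/eqP; rewrite eqEdim subv_add hnuPi hOmPi /=.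
  have := dimv_sum_cap nu Omega.
  rewrite capvC hOmnu dim_nu hL hOm hPi mulnBl; lia.
by rewrite PiE subv_add nuW OmW.
Qed.
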